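(* Let $A,s$ be positive integers, $(\alpha,\beta)\in(\mathbb{Z}/s\mathbb{Z})^2$, and let $\ell=\mathbb{Z}v_1+\mathbb{Z}v_2=[A,b,a]$ with $(a,b)\equiv(\alpha,\beta)\pmod s$ and $Aa-b^2>0$. Let $L$ be a $\mathbb{Z}$-lattice and $w\in R(A,L)$ with $L\prec_{A,(\alpha,\beta),s}w$. If $\ell$ is represented by $L$, then there exists a representation $\sigma:\ell\to L$ with $\sigma(v_1)=w$.
   Context: All $\mathbb{Z}$-lattices are free $\mathbb{Z}$-modules of finite rank with a positive definite, integral symmetric bilinear form $B$; $Q(v)=B(v,v)$. A representation $\sigma:\ell\to L$ is a linear map preserving $B$. $[A,b,a]$ denotes the binary lattice $\mathbb{Z}v_1+\mathbb{Z}v_2$ with $Q(v_1)=A$, $B(v_1,v_2)=b$, $Q(v_2)=a$. Let $V=\mathbb{Q}L$. $R(A,L)=\{v\in L:Q(v)=A\}$. For $v\in R(A,L)$, $R_v(L,\alpha,\beta,s)=\{u\in L/sL: Q(u)\equiv\alpha,\ B(u,v)\equiv\beta\pmod s\}$, $R_v(L,L,s)=\{\tau\in O(V):\tau(sL)\subseteq L,\ \tau(v)\in L\}$, and for $v,w\in R(A,L)$, $R_{v,w}(L,s)=\{\tau\in R_v(L,L,s):\tau(v)=w\}$. We write $L\prec_{A,(\alpha,\beta),s}w$ if for every $v\in R(A,L)$ and every coset $u\in R_v(L,\alpha,\beta,s)$ there is $\tau\in R_{v,w}(L,s)$ with $\tau(\tilde u)\in L$ for all $\tilde u\in L$ with $\tilde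 u\equiv u\pmod{sL}$. *)

(* A Z-lattice L of rank n is modelled by a basis:
   L = Z^n (row vectors 'rV[int]_n) with integer Gram matrix G;
   V = Q L = Q^n ('rV[rat]_n); linear maps act on row vectors on the right. *)
From HB Require Import structures.
From mathcomp Require Import all_boot all_order all_algebra.
Set Implicit Arguments. Unset Strict Implicit. Unset Printing Implicit Defensive.
Import Order.TTheory GRing.Theory Num.Theory.
Local Open Scope ring_scope.

Definition Bf (R : comRingType) (n : nat) (G : 'M[R]_n) (x y : 'rV[R]_n) : R :=
  (x *m G *m y^T) 0 0.
Definition Qf (R : comRingType) (n : nat) (G : 'M[R]_n) (x : 'rV[R]_n) : R :=
  Bf G x x.

Definition lattice_gram (n : nat) (G : 'M[int]_n) : Prop :=
  G^T = G /\ forall x : 'rV[int]_n, x != 0 -> 0 < Qf G x.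

Definition toQv (n : nat) (x : 'rV[int]_n) : 'rV[rat]_n := map_mx (fun z : int => z%:~R) x.
Definition toQm (m n : nat) (G : 'M[int]_(m, n)) : 'M[rat]_(m, n) :=
  map_mx (fun z : int => z%:~R) G.

Definition inL (n : nat) (x : 'rV[rat]_n) : Prop := exists y : 'rV[int]_n, x = toQv y.

Definition congz (s x y : int) : Prop := (s %| (x - y))%Z.

Definition in_OV (n : nat) (G : 'M[int]_n) (T : 'M[rat]_n) : Prop :=
  forall x y : 'rV[rat]_n, Bf (toQm G) (x *m T) (y *m T) = Bf (toQm G) x y.

Definition R_vLL (n : nat) (G : 'M[int]_n) (s : int) (v : 'rV[int]_n) (T : 'M[rat]_n) : Prop :=
  in_OV G T /\ (forall x : 'rV[int]_n, inL ((toQv (s *: x)) *m T)) /\ inL (toQv v *m T).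

Definition R_vw (n : nat) (G : 'M[int]_n) (s : int) (v w : 'rV[int]_n) (T : 'M[rat]_n) : Prop :=
  R_vLL G s v T /\ toQv v *m T = toQv w.

(* L <_{A,(alpha,beta),s} w ; cosets u in L/sL are given by representatives u in L
   (the conditions on u only depend on u mod sL) *)
Definition prec (n : nat) (G : 'M[int]_n) (A alpha beta s : int) (w : 'rV[int]_n) : Prop :=
  forall v : 'rV[int]_n, Qf G v = A ->
  forall u : 'rV[int]_n, congz s (Qf G u) alpha -> congz s (Bf G u v) beta ->
  exists T : 'M[rat]_n, R_vw G s v w T /\
    forall ut : 'rV[int]_n, (exists x : 'rV[int]_n, ut = u + s *: x) -> inL (toQv ut *m T).

Definition gram2 (A b a : int) : 'M[int]_2 :=
  \matrix_(i < 2, j < 2)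
    (if (i : nat) == 0%N then (if (j : nat) == 0%N then A else b)
     else (if (j : nat) == 0%N then b else a)).

Definition is_rep (n : nat) (Gl : 'M[int]_2) (G : 'M[int]_n) (S : 'M[int]_(2, n)) : Prop :=
  forall z1 z2 : 'rV[int]_2, Bf G (z1 *m S) (z2 *m S) = Bf Gl z1 z2.

Definition e1 : 'rV[int]_2 := delta_mx 0 0.

(* Take any representation sigma of [A,b,a] and apply the hypothesis
   L <_{A,(alpha,beta),s} w to v = sigma(v1), which has Q(v) = A, and to the
   coset of u = sigma(v2), for which Q(u) = a and B(u,v) = b have the right
   residues mod s.  This yields an isometry tau of V with tau(v) = w and
   tau(u) in L; then tau o sigma maps the basis of [A,b,a] into L, hence is a
   representation, and it sends v1 to w. *)
From mathcomp Require Import all_boot all_order all_algebra.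
Set Implicit Arguments. Unset Strict Implicit. Unset Printing Implicit Defensive.
Import Order.TTheory GRing.Theory Num.Theory.
Local Open Scope ring_scope.

Lemma toQvM m n (z : 'rV[int]_m) (S : 'M[int]_(m, n)) :
  toQv (z *m S) = toQv z *m toQm S.
Proof. by rewrite /toQv /toQm map_mxM. Qed.

Lemma toQv_inj n : injective (@toQv n).
Proof.
move=> x y /matrixP Exy; apply/matrixP => i j.
by have := Exy i j; rewrite !mxE => /intr_inj.
Qed.

Lemma Bf_toQ n (G : 'M[int]_n) x y :
  (Bf G x y)%:~R = Bf (toQm G) (toQv x) (toQv y) :> rat.
Proof. by rewrite /Bf /toQm /toQv map_trmx -!map_mxM [RHS]mxE. Qed.

Lemma Bf_delta m (M : 'M[int]_m) i j : Bf M (delta_mx 0 i) (delta_mx 0 j) = M i j.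
Proof. by rewrite /Bf -rowE trmx_delta -colE !mxE. Qed.

Lemma is_rep_row n (Gl : 'M[int]_2) (G : 'M[int]_n) S i j :
  is_rep Gl G S -> Bf G (row i S) (row j S) = Gl i j.
Proof. by move=> repS; rewrite !rowE repS Bf_delta. Qed.

Lemma is_rep_OV n (Gl : 'M[int]_2) (G : 'M[int]_n) S T S' :
  is_rep Gl G S -> in_OV G T -> toQm S' = toQm S *m T -> is_rep Gl G S'.
Proof.
move=> repS isoT defS' z1 z2; apply: (@intr_inj rat).
by rewrite Bf_toQ !toQvM defS' !mulmxA isoT -!toQvM -Bf_toQ repS.
Qed.

Lemma inL_rows m n (M : 'M[rat]_(m, n)) :
  (forall i, inL (row i M)) -> exists S : 'M[int]_(m, n), M = toQm S.
Proof.
move=> /fin_all_exists [y defM]; exists (\matrix_i y i).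
apply/row_matrixP => i; rewrite defM /toQm -map_row rowK.
by apply/rowP => j; rewrite !mxE.
Qed.

Theorem lemma2p3 (A s alpha beta a b : int) (n : nat) (G : 'M[int]_n) (w : 'rV[int]_n) :
  0 < A -> 0 < s ->
  congz s a alpha -> congz s b beta ->
  0 < A * a - b ^+ 2 ->
  lattice_gram G ->
  Qf G w = A ->
  prec G A alpha beta s w ->
  (exists S : 'M[int]_(2, n), is_rep (gram2 A b a) G S) ->
  exists S : 'M[int]_(2, n), is_rep (gram2 A b a) G S /\ e1 *m S = w.
Proof.
move=> _ _ a_alpha b_beta _ _ _ precw [S repS].
have rowS i j : Bf G (row i S) (row j S) = gram2 A b a i j.
  exact: is_rep_row.
have Qv : Qf G (row 0 S) = A by rewrite /Qf rowS mxE.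
have Qu : congz s (Qf G (row 1 S)) alpha by rewrite /Qf rowS mxE.
have Buv : congz s (Bf G (row 1 S) (row 0 S)) beta by rewrite rowS mxE.
have [T [[[isoT _] vT] uT]] := precw _ Qv _ Qu Buv.
have rowsT i : inL (row i (toQm S *m T)).
  rewrite row_mul /toQm -map_row -/(toQv _).
  have [->|->] : i = 0 \/ i = 1.
    by case: i => [[|[|//]] lti]; [left | right]; apply: val_inj.
  - by rewrite vT; exists w.
  - by apply: uT; exists 0; rewrite scaler0 addr0.
have [S' defS'] := inL_rows rowsT.
exists S'; split; first exact: is_rep_OV repS isoT _.
by apply: toQv_inj; rewrite -vT rowE !toQvM -defS' mulmxA.
Qed.
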